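(* If $\Delta;\Gamma\vdash M:A$ in DCC, then $\Gamma^\circ\vdash M^\circ:A^\circ$ in CC.
   Context: DCC: expressions $x\mid U_i\mid\Pi x{:}A.B\mid L@M\mid\ell_i\{\overline M\}$ (label names $\ell_i$, lists $\overline M$); type contexts $\Gamma::=\cdot\mid\Gamma,x{:}A$; label contexts $\Delta::=\cdot\mid\Delta,\ell_i(\{\overline x{:}\overline A\},x{:}A\mapsto L:B)$; substitution with $\ell\{\overline M\}[N/x]=\ell\{\overline{M[N/x]}\}$; reduction $\Delta\vdash\ell\{\overline M\}@N\triangleright L[\overline M/\overline x,N/x]$ for $\ell(\{\overline x{:}\overline A\},x{:}A\mapsto L:B)\in\Delta$; equivalence $\Delta\vdash M\equiv N$: common reduct, or $\Delta\vdash L\triangleright^*\ell\{\overline N\}$, $\Delta\vdash M\triangleright^*M'$, $\ell(\{\overline x{:}\overline A\},x{:}A\mapsto N:B)\in\Delta$, $\Delta\vdash N[\overline N/\overline x]\equiv M'@x$ give $\Delta\vdash L\equiv M$, and symmetrically. Typing/formation (mutual): variables from a well-formed context, $U_i:U_{i+1}$, $\Pi x{:}A.B:U_{\max(i,j)}$, $M@N:B[N/x]$ for $M:\Pi x{:}A.B$, $N:A$, conversion along $\equiv$ to a type $B:U_i$, and: if $\vdash\Delta;\Gamma$, $\ell(\{\overline x{:}\overline A\},x{:}A\mapsto M:B)\in\Delta$, $|\overline M|=|\overline x|$, $\Delta;\Gamma\vdash M_k:A_k[M_1/x_1,\dots,M_{k-1}/x_{k-1}]$ for all $k$, then $\Delta;\Gamma\vdash\ell\{\overline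 M\}:\Pi x{:}A[\overline M/\overline x].B[\overline M/\overline x]$; $\vdash\cdot;\cdot$; fresh label entries may be added when $\Delta;\overline x{:}\overline A\vdash\Pi x{:}A.B:U_i$ and $\Delta;\overline x{:}\overline A,x{:}A\vdash M:B$; $\vdash\Delta;\Gamma,\Delta;\Gamma\vdash A:U_i\Rightarrow\vdash\Delta;\Gamma,x{:}A$. CC: expressions $x\mid U_i\mid\Pi x{:}A.B\mid L\,M\mid\lambda x{:}A.M$ with standard typing rules (variable, $U_i:U_{i+1}$, $\Pi$ in $U_{\max(i,j)}$, $M\,N:B[N/x]$, $\lambda x{:}A.M:\Pi x{:}A.B$ for $M:B$ under $x{:}A$, conversion along $\beta\eta$-equivalence). Backward transformation (relative to $\Delta$, on well-typed terms): $x^\circ=x$, $U_i^\circ=U_i$, $(\Pi x{:}A.B)^\circ=\Pi x{:}A^\circ.B^\circ$, $(M@N)^\circ=M^\circ\,N^\circ$, $(\ell\{\overline M\})^\circ=\lambda x{:}A^\circ[\overline{M^\circ}/\overline x].\,L^\circ[\overline{M^\circ}/\overline x]$ where $\ell(\{\overline x{:}\overline A\},x{:}A\mapsto L:B)\in\Delta$; pointwise on type contexts: $(\Gamma,x{:}A)^\circ=\Gamma^\circ,x{:}A^\circ$. *)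

(* Variables are de Bruijn
   indices (index 0 = most recently bound variable); contexts are lists whose
   head is the most recent entry. *)
From Stdlib Require Import List Arith Relations.
Import ListNotations.

Definition uprn (xi : nat -> nat) : nat -> nat :=
  fun n => match n with 0 => 0 | S k => S (xi k) end.

Inductive dterm : Type :=
| DVar  : nat -> dterm
| DUniv : nat -> dterm
| DPi   : dterm -> dterm -> dterm
| DApp  : dterm -> dterm -> dterm
| DLab  : nat -> list dterm -> dterm.

Fixpoint dren (xi : nat -> nat) (t : dterm) : dterm :=
  match t with
  | DVar n => DVar (xi n)
  | DUniv i => DUniv i
  | DPi A B => DPi (dren xi A) (dren (uprn xi) B)
  | DApp M N => DApp (dren xi M) (dren xi N)
  | DLab l Ms => DLab l (map (dren xi) Ms)
  end.

Definition dup (s : nat -> dterm) : nat -> dterm :=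
  fun n => match n with 0 => DVar 0 | S k => dren S (s k) end.

Fixpoint dsubst (s : nat -> dterm) (t : dterm) : dterm :=
  match t with
  | DVar n => s n
  | DUniv i => DUniv i
  | DPi A B => DPi (dsubst s A) (dsubst (dup s) B)
  | DApp M N => DApp (dsubst s M) (dsubst s N)
  | DLab l Ms => DLab l (map (dsubst s) Ms)
  end.

Definition dsubst1 (N : dterm) (t : dterm) : dterm :=
  dsubst (fun n => match n with 0 => N | S k => DVar k end) t.

(* simultaneous instantiation t[M1/x1,...,Mn/xn] for t in context
   x1,...,xn (xn = index 0); Ms = [M1; ...; Mn] *)
Definition dinst_sub (Ms : list dterm) : nat -> dterm :=
  fun j => nth j (rev Ms) (DVar (j - length Ms)).
Definition dinst (Ms : list dterm) (t : dterm) : dterm := dsubst (dinst_sub Ms) t.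

(* label entry  l({x1:A1,...,xn:An}, x:A |-> L : B);
   A_k lives in context x1..x_{k-1}; A in x1..xn; L, B in x1..xn,x *)
Record lentry : Type := LEntry {
  lname   : nat;
  lparams : list dterm;   (* [A1; ...; An] *)
  ldom    : dterm;
  lbody   : dterm;
  lcod    : dterm
}.

Definition lctx := list lentry.
Definition dctx := list dterm.

Inductive dstep (D : lctx) : dterm -> dterm -> Prop :=
| dstep_lab : forall e Ms N,
    In e D -> length Ms = length (lparams e) ->
    dstep D (DApp (DLab (lname e) Ms) N) (dinst (Ms ++ [N]) (lbody e))
| dstep_pil : forall A A' B, dstep D A A' -> dstep D (DPi A B) (DPi A' B)
| dstep_pir : forall A B B', dstep D B B' -> dstep D (DPi A B) (DPi A B')
| dstep_appl : forall M M' N, dstep D M M' -> dstep D (DApp M N) (DApp M' N)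
| dstep_appr : forall M N N', dstep D N N' -> dstep D (DApp M N) (DApp M N')
| dstep_lab_arg : forall l Ms1 M M' Ms2, dstep D M M' ->
    dstep D (DLab l (Ms1 ++ M :: Ms2)) (DLab l (Ms1 ++ M' :: Ms2)).

Definition dred (D : lctx) : dterm -> dterm -> Prop := clos_refl_trans _ (dstep D).

Inductive deq (D : lctx) : dterm -> dterm -> Prop :=
| deq_common : forall M N P, dred D M P -> dred D N P -> deq D M N
| deq_etal : forall L M M' e Ns,
    dred D L (DLab (lname e) Ns) -> dred D M M' -> In e D ->
    deq D (dsubst (dup (dinst_sub Ns)) (lbody e)) (DApp (dren S M') (DVar 0)) ->
    deq D L M
| deq_etar : forall L M M' e Ns,
    dred D L (DLab (lname e) Ns) -> dred D M M' -> In e D ->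
    deq D (dsubst (dup (dinst_sub Ns)) (lbody e)) (DApp (dren S M') (DVar 0)) ->
    deq D M L.

Inductive dwf : lctx -> dctx -> Prop :=
| dwf_empty : dwf [] []
| dwf_label : forall D e i,
    ~ (exists e', In e' D /\ lname e' = lname e) ->
    dtyping D (rev (lparams e)) (DPi (ldom e) (lcod e)) (DUniv i) ->
    dtyping D (ldom e :: rev (lparams e)) (lbody e) (lcod e) ->
    dwf (e :: D) []
| dwf_ext : forall D G A i,
    dwf D G -> dtyping D G A (DUniv i) -> dwf D (A :: G)
with dtyping : lctx -> dctx -> dterm -> dterm -> Prop :=
| dty_var : forall D G n A,
    dwf D G -> nth_error G n = Some A ->
    dtyping D G (DVar n) (dren (fun k => S n + k) A)
| dty_univ : forall D G i, dwf D G -> dtyping D G (DUniv i) (DUniv (S i))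
| dty_pi : forall D G A B i j,
    dtyping D G A (DUniv i) -> dtyping D (A :: G) B (DUniv j) ->
    dtyping D G (DPi A B) (DUniv (Nat.max i j))
| dty_app : forall D G M N A B,
    dtyping D G M (DPi A B) -> dtyping D G N A ->
    dtyping D G (DApp M N) (dsubst1 N B)
| dty_conv : forall D G M A B i,
    dtyping D G M A -> deq D A B -> dtyping D G B (DUniv i) ->
    dtyping D G M B
| dty_lab : forall D G e Ms,
    dwf D G -> In e D ->
    length Ms = length (lparams e) ->
    (forall k, k < length Ms ->
       dtyping D G (nth k Ms (DVar 0))
               (dinst (firstn k Ms) (nth k (lparams e) (DVar 0)))) ->
    dtyping D G (DLab (lname e) Ms) (dinst Ms (DPi (ldom e) (lcod e))).

Inductive cterm : Type :=
| CVar  : nat -> cterm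
| CUniv : nat -> cterm
| CPi   : cterm -> cterm -> cterm
| CApp  : cterm -> cterm -> cterm
| CLam  : cterm -> cterm -> cterm.

Fixpoint cren (xi : nat -> nat) (t : cterm) : cterm :=
  match t with
  | CVar n => CVar (xi n)
  | CUniv i => CUniv i
  | CPi A B => CPi (cren xi A) (cren (uprn xi) B)
  | CApp M N => CApp (cren xi M) (cren xi N)
  | CLam A M => CLam (cren xi A) (cren (uprn xi) M)
  end.

Definition cup (s : nat -> cterm) : nat -> cterm :=
  fun n => match n with 0 => CVar 0 | S k => cren S (s k) end.

Fixpoint csubst (s : nat -> cterm) (t : cterm) : cterm :=
  match t with
  | CVar n => s n
  | CUniv i => CUniv i
  | CPi A B => CPi (csubst s A) (csubst (cup s) B)
  | CApp M N => CApp (csubst s M) (csubst s N)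
  | CLam A M => CLam (csubst s A) (csubst (cup s) M)
  end.

Definition csubst1 (N : cterm) (t : cterm) : cterm :=
  csubst (fun n => match n with 0 => N | S k => CVar k end) t.

Definition cinst_sub (Ms : list cterm) : nat -> cterm :=
  fun j => nth j (rev Ms) (CVar (j - length Ms)).

Definition cctx := list cterm.

Inductive cstep : cterm -> cterm -> Prop :=
| cstep_beta : forall A M N, cstep (CApp (CLam A M) N) (csubst1 N M)
| cstep_eta : forall A M, cstep (CLam A (CApp (cren S M) (CVar 0))) M
| cstep_pil : forall A A' B, cstep A A' -> cstep (CPi A B) (CPi A' B)
| cstep_pir : forall A B B', cstep B B' -> cstep (CPi A B) (CPi A B')
| cstep_appl : forall M M' N, cstep M M' -> cstep (CApp M N) (CApp M' N)
| cstep_appr : forall M N N', cstep N N' -> cstep (CApp M N) (CApp M N')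
| cstep_laml : forall A A' M, cstep A A' -> cstep (CLam A M) (CLam A' M)
| cstep_lamr : forall A M M', cstep M M' -> cstep (CLam A M) (CLam A M').

Definition cconv : cterm -> cterm -> Prop := clos_refl_sym_trans _ cstep.

Inductive cwf : cctx -> Prop :=
| cwf_empty : cwf []
| cwf_ext : forall G A i, cwf G -> ctyping G A (CUniv i) -> cwf (A :: G)
with ctyping : cctx -> cterm -> cterm -> Prop :=
| cty_var : forall G n A,
    cwf G -> nth_error G n = Some A ->
    ctyping G (CVar n) (cren (fun k => S n + k) A)
| cty_univ : forall G i, cwf G -> ctyping G (CUniv i) (CUniv (S i))
| cty_pi : forall G A B i j,
    ctyping G A (CUniv i) -> ctyping (A :: G) B (CUniv j) ->
    ctyping G (CPi A B) (CUniv (Nat.max i j))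
| cty_app : forall G M N A B,
    ctyping G M (CPi A B) -> ctyping G N A ->
    ctyping G (CApp M N) (csubst1 N B)
| cty_lam : forall G A M B,
    ctyping (A :: G) M B -> ctyping G (CLam A M) (CPi A B)
| cty_conv : forall G M A B i,
    ctyping G M A -> cconv A B -> ctyping G B (CUniv i) ->
    ctyping G M B.

(* Backward transformation.  A translation table holds, for each label
   entry, its name, the translated domain A° and the translated body L°. *)
Definition ttable := list (nat * cterm * cterm).

Fixpoint tlookup (l : nat) (T : ttable) : option (cterm * cterm) :=
  match T with
  | [] => None
  | (l', A, L) :: T' => if Nat.eqb l l' then Some (A, L) else tlookup l T'
  end.

Fixpoint btrans (T : ttable) (t : dterm) : cterm :=
  match t with
  | DVar n => CVar n
  | DUniv i => CUniv i
  | DPi A B => CPi (btrans T A) (btrans T B)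
  | DApp M N => CApp (btrans T M) (btrans T N)
  | DLab l Ms =>
      match tlookup l T with
      | Some (A, L) =>
          csubst (cinst_sub (map (btrans T) Ms)) (CLam A L)
      | None => CUniv 0   (* never happens for well-typed terms *)
      end
  end.

Fixpoint btable (D : lctx) : ttable :=
  match D with
  | [] => []
  | e :: D' => let T := btable D' in
               (lname e, btrans T (ldom e), btrans T (lbody e)) :: T
  end.

Definition bterm (D : lctx) (M : dterm) : cterm := btrans (btable D) M.
Definition bctx (D : lctx) (G : dctx) : cctx := map (bterm D) G.

(* A label instance l{Ms} is translated to the abstraction
   lambda x:A°[Ms°]. L°[Ms°], so DCC's label reduction becomes a beta step and
   the eta-like clause of DCC equivalence becomes a CC eta step: equivalent
   DCC types translate to beta-eta-convertible CC types.  Every other typing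
   rule maps to the matching CC rule; the label rule is the typing
   lambda x:A°. L° : Pi x:A°. B° of the label's definition, instantiated by the
   translated arguments through the CC substitution lemma.  All of this needs
   the translation to commute with renaming and substitution, which holds
   because every translated label abstraction is closed over its parameters;
   the induction carries this invariant along with the typing of each label
   entry. *)
From Stdlib Require Import List Arith Lia Relations.
Import ListNotations.

(** * Renaming and substitution in CC *)

Lemma uprn_ext f g : (forall n, f n = g n) -> forall n, uprn f n = uprn g n.
Proof. intros H [|n]; simpl; auto. Qed.

Lemma cren_ext t : forall f g, (forall n, f n = g n) -> cren f t = cren g t.
Proof. induction t; simpl; intros f g H; f_equal; eauto using uprn_ext. Qed.

Lemma cren_cren t : forall f g, cren f (cren g t) = cren (fun n => f (g n)) t.
Proof.
  induction t; simpl; intros f g; f_equal; auto;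
    rewrite IHt2; apply cren_ext; intros [|n]; reflexivity.
Qed.

Lemma cup_ext s r : (forall n, s n = r n) -> forall n, cup s n = cup r n.
Proof. intros H [|n]; simpl; f_equal; auto. Qed.

Lemma csubst_ext t : forall s r, (forall n, s n = r n) -> csubst s t = csubst r t.
Proof. induction t; simpl; intros s r H; f_equal; eauto using cup_ext. Qed.

Lemma csubst_cren t : forall s f, csubst s (cren f t) = csubst (fun n => s (f n)) t.
Proof.
  induction t; simpl; intros s f; f_equal; auto;
    rewrite IHt2; apply csubst_ext; intros [|n]; reflexivity.
Qed.

Lemma cren_csubst t : forall s f, cren f (csubst s t) = csubst (fun n => cren f (s n)) t.
Proof.
  induction t; simpl; intros s f; f_equal; auto;
    rewrite IHt2; apply csubst_ext; intros [|n]; simpl; auto;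
    rewrite !cren_cren; reflexivity.
Qed.

Lemma csubst_csubst t : forall s r,
  csubst r (csubst s t) = csubst (fun n => csubst r (s n)) t.
Proof.
  induction t; simpl; intros s r; f_equal; auto;
    rewrite IHt2; apply csubst_ext; intros [|n]; simpl; auto;
    rewrite csubst_cren, cren_csubst; reflexivity.
Qed.

Lemma csubst_var t : forall s, (forall n, s n = CVar n) -> csubst s t = t.
Proof.
  induction t; simpl; intros s H; f_equal; auto;
    apply IHt2; intros [|n]; simpl; auto; rewrite H; reflexivity.
Qed.

Lemma cren_csubst1 N t f :
  cren f (csubst1 N t) = csubst1 (cren f N) (cren (uprn f) t).
Proof.
  unfold csubst1. rewrite cren_csubst, csubst_cren.
  apply csubst_ext. intros [|n]; reflexivity.
Qed.

Lemma csubst_csubst1 N t s :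
  csubst s (csubst1 N t) = csubst1 (csubst s N) (csubst (cup s) t).
Proof.
  unfold csubst1. rewrite !csubst_csubst. apply csubst_ext. intros [|n]; simpl; auto.
  rewrite csubst_cren, csubst_var; reflexivity.
Qed.

Fixpoint cclosed (n : nat) (t : cterm) : Prop :=
  match t with
  | CVar k => k < n
  | CUniv _ => True
  | CPi A B | CLam A B => cclosed n A /\ cclosed (S n) B
  | CApp M N => cclosed n M /\ cclosed n N
  end.

Lemma csubst_ext_closed t : forall n s r, cclosed n t ->
  (forall k, k < n -> s k = r k) -> csubst s t = csubst r t.
Proof.
  induction t; simpl; intros m s r Hc H; auto; f_equal; intuition eauto;
    eapply IHt2; eauto; intros [|k] Hk; simpl; auto; f_equal; apply H; lia.
Qed.

Lemma cclosed_cren t : forall n m f, cclosed n t ->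
  (forall k, k < n -> f k < m) -> cclosed m (cren f t).
Proof.
  induction t; simpl; intros n' m f Hc H; intuition eauto;
    eapply IHt2; try eassumption; intros [|k] Hk; simpl; try lia; specialize (H k); lia.
Qed.

Lemma cclosed_csubst t : forall n m s, cclosed n t ->
  (forall k, k < n -> cclosed m (s k)) -> cclosed m (csubst s t).
Proof.
  induction t; simpl; intros n' m s Hc H; intuition eauto;
    eapply IHt2; try eassumption; intros [|k] Hk; simpl; try lia;
    apply (cclosed_cren _ m); intros; try apply H; lia.
Qed.

Lemma cinst_sub_map f Ms k :
  k < length Ms -> cinst_sub (map f Ms) k = f (cinst_sub Ms k).
Proof.
  intros H. unfold cinst_sub. rewrite <- map_rev, length_map.
  rewrite nth_indep with (d' := f (CVar (k - length Ms))) by (rewrite length_map, length_rev; auto).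
  apply map_nth.
Qed.

Lemma cren_cinst_sub f Ns t : cclosed (length Ns) t ->
  cren f (csubst (cinst_sub Ns) t) = csubst (cinst_sub (map (cren f) Ns)) t.
Proof.
  intros Ht. rewrite cren_csubst. apply (csubst_ext_closed _ _ _ _ Ht).
  intros k Hk. rewrite cinst_sub_map; auto.
Qed.

Lemma csubst_cinst_sub s Ns t : cclosed (length Ns) t ->
  csubst s (csubst (cinst_sub Ns) t) = csubst (cinst_sub (map (csubst s) Ns)) t.
Proof.
  intros Ht. rewrite csubst_csubst. apply (csubst_ext_closed _ _ _ _ Ht).
  intros k Hk. rewrite cinst_sub_map; auto.
Qed.

Lemma cinst_sub_snoc Ms N n :
  csubst1 N (cup (cinst_sub Ms) n) = cinst_sub (Ms ++ [N]) n.
Proof.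
  unfold csubst1, cinst_sub. rewrite rev_unit, length_app. destruct n as [|n]; simpl; auto.
  rewrite csubst_cren, csubst_var, Nat.add_1_r by reflexivity. reflexivity.
Qed.

Lemma cinst_sub_firstn l k j : k <= length l -> j < k ->
  cinst_sub (firstn k l) j = cinst_sub l (length l - k + j).
Proof.
  intros Hk Hj. unfold cinst_sub.
  assert (Lk : length (firstn k l) = k) by (rewrite length_firstn; lia).
  rewrite !rev_nth by lia. rewrite Lk, nth_firstn.
  replace (Nat.ltb (k - S j) k) with true by (symmetry; apply Nat.ltb_lt; lia).
  replace (length l - S (length l - k + j)) with (k - S j) by lia.
  apply nth_indep. lia.
Qed.

(** * Beta-eta conversion *)

Lemma cstep_cren t u : cstep t u -> forall f, cstep (cren f t) (cren f u).
Proof.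
  induction 1; intros f; simpl; try (constructor; auto; fail).
  - rewrite cren_csubst1. constructor.
  - replace (cren (uprn f) (cren S M)) with (cren S (cren f M)) by (rewrite !cren_cren; reflexivity).
    constructor.
Qed.

Lemma cstep_csubst t u : cstep t u -> forall s, cstep (csubst s t) (csubst s u).
Proof.
  induction 1; intros s; simpl; try (constructor; auto; fail).
  - rewrite csubst_csubst1. constructor.
  - replace (csubst (cup s) (cren S M)) with (cren S (csubst s M))
      by (rewrite csubst_cren, cren_csubst; reflexivity).
    constructor.
Qed.

Lemma cconv_refl a : cconv a a.
Proof. apply rst_refl. Qed.

Lemma cconv_sym a b : cconv a b -> cconv b a.
Proof. apply rst_sym. Qed.

Lemma cconv_trans a b c : cconv a b -> cconv b c -> cconv a c.
Proof. apply rst_trans. Qed.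

Lemma cstep_cconv a b : cstep a b -> cconv a b.
Proof. apply rst_step. Qed.

#[local] Hint Resolve cconv_refl cconv_sym cstep_cconv : core.

Lemma cconv_map (g : cterm -> cterm) :
  (forall a b, cstep a b -> cstep (g a) (g b)) ->
  forall a b, cconv a b -> cconv (g a) (g b).
Proof. intros Hg a b C. induction C; eauto using cconv_trans. Qed.

Lemma cconv_map2 (g : cterm -> cterm -> cterm) :
  (forall a a' b, cstep a a' -> cstep (g a b) (g a' b)) ->
  (forall a b b', cstep b b' -> cstep (g a b) (g a b')) ->
  forall a a' b b', cconv a a' -> cconv b b' -> cconv (g a b) (g a' b').
Proof.
  intros Hl Hr a a' b b' Ca Cb. apply cconv_trans with (g a' b).
  - apply (cconv_map (fun x => g x b)); auto.
  - apply cconv_map; auto.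
Qed.

Lemma cconv_pi A A' B B' : cconv A A' -> cconv B B' -> cconv (CPi A B) (CPi A' B').
Proof. exact (cconv_map2 CPi (cstep_pil) (cstep_pir) A A' B B'). Qed.

Lemma cconv_app M M' N N' : cconv M M' -> cconv N N' -> cconv (CApp M N) (CApp M' N').
Proof. exact (cconv_map2 CApp (cstep_appl) (cstep_appr) M M' N N'). Qed.

Lemma cconv_lam A A' M M' : cconv A A' -> cconv M M' -> cconv (CLam A M) (CLam A' M').
Proof. exact (cconv_map2 CLam (cstep_laml) (cstep_lamr) A A' M M'). Qed.

Lemma cconv_cren f a b : cconv a b -> cconv (cren f a) (cren f b).
Proof. apply cconv_map. auto using cstep_cren. Qed.

Lemma cconv_csubst s a b : cconv a b -> cconv (csubst s a) (csubst s b).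
Proof. apply cconv_map. auto using cstep_csubst. Qed.

Lemma cconv_csubst_pointwise t : forall s r, (forall n, cconv (s n) (r n)) ->
  cconv (csubst s t) (csubst r t).
Proof.
  induction t; simpl; intros s r H; auto using cconv_pi, cconv_app, cconv_lam;
    [apply cconv_pi | apply cconv_lam]; auto;
    apply IHt2; intros [|n]; simpl; auto using cconv_cren.
Qed.

Lemma Forall2_refl {X} (R : X -> X -> Prop) : (forall x, R x x) -> forall l, Forall2 R l l.
Proof. intros HR l. induction l; auto. Qed.

Lemma Forall2_rev {X Y} (R : X -> Y -> Prop) l1 l2 :
  Forall2 R l1 l2 -> Forall2 R (rev l1) (rev l2).
Proof. induction 1; simpl; auto using Forall2_app. Qed.

Lemma Forall2_nth {X Y} (R : X -> Y -> Prop) l1 l2 d1 d2 n :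
  Forall2 R l1 l2 -> R d1 d2 -> R (nth n l1 d1) (nth n l2 d2).
Proof. intros H. revert n. induction H; intros [|n] Hd; simpl; auto. Qed.

Lemma cinst_sub_cconv l1 l2 : Forall2 cconv l1 l2 ->
  forall n, cconv (cinst_sub l1 n) (cinst_sub l2 n).
Proof.
  intros H n. unfold cinst_sub. rewrite (Forall2_length H).
  apply Forall2_nth; auto using Forall2_rev.
Qed.

(** * Typing metatheory of CC *)

(* CC typing in which the domain of a lambda is typed explicitly.  Renaming
   and substitution under a lambda extend the target context by the image of
   its domain and so need that typing; [ctyping'_complete] recovers it from
   the well-formedness of the body's context. *)
Inductive cwf' : cctx -> Prop :=
| cwf'_empty : cwf' []
| cwf'_ext : forall G A i, cwf' G -> ctyping' G A (CUniv i) -> cwf' (A :: G)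
with ctyping' : cctx -> cterm -> cterm -> Prop :=
| cty'_var : forall G n A,
    cwf' G -> nth_error G n = Some A ->
    ctyping' G (CVar n) (cren (fun k => S n + k) A)
| cty'_univ : forall G i, cwf' G -> ctyping' G (CUniv i) (CUniv (S i))
| cty'_pi : forall G A B i j,
    ctyping' G A (CUniv i) -> ctyping' (A :: G) B (CUniv j) ->
    ctyping' G (CPi A B) (CUniv (Nat.max i j))
| cty'_app : forall G M N A B,
    ctyping' G M (CPi A B) -> ctyping' G N A ->
    ctyping' G (CApp M N) (csubst1 N B)
| cty'_lam : forall G A M B i,
    ctyping' G A (CUniv i) ->
    ctyping' (A :: G) M B -> ctyping' G (CLam A M) (CPi A B)
| cty'_conv : forall G M A B i,
    ctyping' G M A -> cconv A B -> ctyping' G B (CUniv i) ->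
    ctyping' G M B.

Scheme cwf_mut := Induction for cwf Sort Prop
with ctyping_mut := Induction for ctyping Sort Prop.
Combined Scheme cwf_ctyping_mut from cwf_mut, ctyping_mut.

Scheme cwf'_mut := Induction for cwf' Sort Prop
with ctyping'_mut := Induction for ctyping' Sort Prop.
Combined Scheme cwf'_ctyping'_mut from cwf'_mut, ctyping'_mut.

Lemma ctyping'_cwf' G t T : ctyping' G t T -> cwf' G.
Proof. induction 1; auto. Qed.

Lemma ctyping'_complete :
  (forall G, cwf G -> cwf' G) /\ (forall G t T, ctyping G t T -> ctyping' G t T).
Proof.
  apply (cwf_ctyping_mut (fun G _ => cwf' G) (fun G t T _ => ctyping' G t T));
    intros; try (econstructor; eauto; fail).
  match goal with H : ctyping' (_ :: _) _ _ |- _ =>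
    pose proof (ctyping'_cwf' _ _ _ H) as HG; inversion HG; subst end.
  econstructor; eauto.
Qed.

Lemma ctyping'_scoped :
  (forall G, cwf' G -> forall n A, nth_error G n = Some A -> cclosed (length G - S n) A) /\
  (forall G t T, ctyping' G t T -> cclosed (length G) t /\ cclosed (length G) T).
Proof.
  apply (cwf'_ctyping'_mut
           (fun G _ => forall n A, nth_error G n = Some A -> cclosed (length G - S n) A)
           (fun G t T _ => cclosed (length G) t /\ cclosed (length G) T));
    intros; simpl in *; try tauto.
  - destruct n; discriminate.
  - destruct n; simpl in *; auto.
    injection H1 as <-. rewrite Nat.sub_0_r. tauto.
  - assert (n < length G) by (apply nth_error_Some; congruence).
    split; [auto|]. eapply cclosed_cren; [eauto | intros; lia].
  - split; [tauto|]. eapply cclosed_csubst; [apply H|]. intros [|k] Hk; simpl; tauto || lia.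
Qed.

Lemma cwf_nth_closed G n A : cwf G -> nth_error G n = Some A -> cclosed (length G - S n) A.
Proof. intros HG. apply (proj1 ctyping'_scoped), (proj1 ctyping'_complete), HG. Qed.

Lemma ctyping_closed G t T : ctyping G t T -> cclosed (length G) t.
Proof.
  intros H. exact (proj1 (proj2 ctyping'_scoped _ _ _ (proj2 ctyping'_complete _ _ _ H))).
Qed.

Definition typed_ren (G' : cctx) (f : nat -> nat) (G : cctx) : Prop :=
  forall n A, nth_error G n = Some A -> exists A', nth_error G' (f n) = Some A' /\
    cren (fun k => S (f n) + k) A' = cren f (cren (fun k => S n + k) A).

Lemma typed_ren_up G' f G A :
  typed_ren G' f G -> typed_ren (cren f A :: G') (uprn f) (A :: G).
Proof.
  intros H [|n] B Hn; simpl in *.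
  - injection Hn as <-. eexists; split; [reflexivity|]. rewrite !cren_cren. reflexivity.
  - destruct (H n B Hn) as [A' [HA' E]]. exists A'. split; auto.
    transitivity (cren S (cren (fun k => S (f n) + k) A')).
    + rewrite cren_cren. reflexivity.
    + rewrite E, !cren_cren. reflexivity.
Qed.

Lemma ctyping'_cren G t T : ctyping' G t T -> forall G' f, cwf G' -> typed_ren G' f G ->
  ctyping G' (cren f t) (cren f T).
Proof.
  induction 1; intros G' f HG' Hf; [|simpl..].
  - destruct (Hf n A H0) as [A' [HA' <-]]. constructor; auto.
  - constructor; auto.
  - econstructor; eauto using cwf, typed_ren_up.
  - rewrite cren_csubst1. econstructor; eauto.
  - constructor. eauto using cwf, typed_ren_up.
  - eapply cty_conv; eauto using cconv_cren.
Qed.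

Lemma ctyping_weaken G t T B :
  ctyping G t T -> cwf (B :: G) -> ctyping (B :: G) (cren S t) (cren S T).
Proof.
  intros H HG. apply (proj2 ctyping'_complete) in H. apply (ctyping'_cren _ _ _ H); auto.
  intros n A Hn. exists A. split; auto. rewrite cren_cren. reflexivity.
Qed.

Definition typed_subst (G' : cctx) (s : nat -> cterm) (G : cctx) : Prop :=
  forall n A, nth_error G n = Some A -> ctyping G' (s n) (csubst s (cren (fun k => S n + k) A)).

Lemma typed_subst_up G' s G A i :
  typed_subst G' s G -> cwf G' -> ctyping G' (csubst s A) (CUniv i) ->
  typed_subst (csubst s A :: G') (cup s) (A :: G).
Proof.
  intros H HG' HA [|n] B Hn; simpl in *.
  - injection Hn as <-.
    replace (csubst (cup s) (cren (fun k => S k) A)) with (cren (fun k => S (0 + k)) (csubst s A))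
      by (rewrite csubst_cren, cren_csubst; reflexivity).
    constructor; eauto using cwf.
  - replace (csubst (cup s) (cren (fun k => S (S (n + k))) B))
      with (cren S (csubst s (cren (fun k => S (n + k)) B)))
      by (rewrite !csubst_cren, cren_csubst; reflexivity).
    apply ctyping_weaken; eauto using cwf.
Qed.

Lemma ctyping'_csubst G t T : ctyping' G t T -> forall G' s, cwf G' -> typed_subst G' s G ->
  ctyping G' (csubst s t) (csubst s T).
Proof.
  induction 1; intros G' s HG' Hs; [|simpl..].
  - apply Hs; auto.
  - constructor; auto.
  - specialize (IHctyping'1 G' s HG' Hs).
    econstructor; eauto using cwf, typed_subst_up.
  - rewrite csubst_csubst1. econstructor; eauto.
  - specialize (IHctyping'1 G' s HG' Hs).
    constructor. eauto using cwf, typed_subst_up.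
  - eapply cty_conv; eauto using cconv_csubst.
Qed.

Lemma ctyping_csubst G t T G' s :
  ctyping G t T -> cwf G' -> typed_subst G' s G -> ctyping G' (csubst s t) (csubst s T).
Proof. intros H. apply (proj2 ctyping'_complete) in H. eauto using ctyping'_csubst. Qed.

Lemma typed_subst_cinst_sub G Ps Ms : cwf (rev Ps) -> length Ms = length Ps ->
  (forall k, k < length Ms -> ctyping G (nth k Ms (CVar 0))
     (csubst (cinst_sub (firstn k Ms)) (nth k Ps (CVar 0)))) ->
  typed_subst G (cinst_sub Ms) (rev Ps).
Proof.
  intros HPs Hlen HMs n P Hn.
  assert (Hnl : n < length Ps) by (rewrite <- length_rev; apply nth_error_Some; congruence).
  set (k := length Ps - S n).
  assert (HP : P = nth k Ps (CVar 0)).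
  { apply nth_error_nth with (d := CVar 0) in Hn. rewrite rev_nth in Hn by lia. auto. }
  assert (HPc : cclosed k P).
  { pose proof (cwf_nth_closed _ _ _ HPs Hn) as Hc. rewrite length_rev in Hc. exact Hc. }
  replace (cinst_sub Ms n) with (nth k Ms (CVar 0)).
  2:{ unfold cinst_sub. rewrite rev_nth by lia. rewrite Hlen. apply nth_indep. lia. }
  replace (csubst (cinst_sub Ms) (cren (fun j => S n + j) P))
    with (csubst (cinst_sub (firstn k Ms)) (nth k Ps (CVar 0))); [apply HMs; lia|].
  rewrite csubst_cren, <- HP. apply (csubst_ext_closed _ _ _ _ HPc).
  intros j Hj. rewrite cinst_sub_firstn by lia. f_equal. lia.
Qed.

(** * Translating DCC terms *)

Section DtermNestedInd.
Variable P : dterm -> Prop.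
Hypothesis P_var : forall n, P (DVar n).
Hypothesis P_univ : forall i, P (DUniv i).
Hypothesis P_pi : forall A B, P A -> P B -> P (DPi A B).
Hypothesis P_app : forall M N, P M -> P N -> P (DApp M N).
Hypothesis P_lab : forall l Ms, Forall P Ms -> P (DLab l Ms).

Fixpoint dterm_nested_ind (t : dterm) : P t :=
  match t with
  | DVar n => P_var n
  | DUniv i => P_univ i
  | DPi A B => P_pi A B (dterm_nested_ind A) (dterm_nested_ind B)
  | DApp M N => P_app M N (dterm_nested_ind M) (dterm_nested_ind N)
  | DLab l Ms => P_lab l Ms
      ((fix all (Ms : list dterm) : Forall P Ms :=
          match Ms with
          | [] => Forall_nil _
          | M :: Ms' => Forall_cons _ (dterm_nested_ind M) (all Ms')
          end) Ms)
  end.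
End DtermNestedInd.

(* Closedness of the table's abstraction over the label's arguments is what
   makes the translation commute with substitution ([btrans_dsubst]). *)
Inductive resolved (T : ttable) : dterm -> Prop :=
| resolved_var n : resolved T (DVar n)
| resolved_univ i : resolved T (DUniv i)
| resolved_pi A B : resolved T A -> resolved T B -> resolved T (DPi A B)
| resolved_app M N : resolved T M -> resolved T N -> resolved T (DApp M N)
| resolved_lab l Ms A L : tlookup l T = Some (A, L) -> cclosed (length Ms) (CLam A L) ->
    Forall (resolved T) Ms -> resolved T (DLab l Ms).

#[local] Hint Constructors resolved : core.

Lemma btrans_lab T l Ms A L : tlookup l T = Some (A, L) ->
  btrans T (DLab l Ms) = csubst (cinst_sub (map (btrans T) Ms)) (CLam A L).
Proof. intros Hl. simpl. rewrite Hl. reflexivity. Qed.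

Lemma btrans_dinst_sub T Ms j :
  btrans T (dinst_sub Ms j) = cinst_sub (map (btrans T) Ms) j.
Proof.
  unfold dinst_sub, cinst_sub. rewrite <- map_rev, length_map.
  change (CVar (j - length Ms)) with (btrans T (DVar (j - length Ms))).
  symmetry; apply map_nth.
Qed.

Lemma resolved_dren T t : resolved T t -> forall f, resolved T (dren f t).
Proof.
  induction t using dterm_nested_ind; intros Ht f; inversion Ht; subst; simpl;
    econstructor; eauto.
  - rewrite length_map; auto.
  - rewrite Forall_map. rewrite Forall_forall in *. auto.
Qed.

Lemma resolved_dsubst T t : resolved T t ->
  forall s, (forall n, resolved T (s n)) -> resolved T (dsubst s t).
Proof.
  induction t using dterm_nested_ind; intros Ht s Hs; inversion Ht; subst; simpl; auto.
  - constructor; auto. apply IHt2; auto.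
    intros [|n]; simpl; auto using resolved_var, resolved_dren.
  - econstructor; eauto.
    + rewrite length_map; auto.
    + rewrite Forall_map. rewrite Forall_forall in *. auto.
Qed.

Lemma resolved_dinst_sub T Ms : Forall (resolved T) Ms -> forall n, resolved T (dinst_sub Ms n).
Proof.
  intros H n. unfold dinst_sub.
  destruct (Nat.lt_ge_cases n (length (rev Ms))).
  - apply Forall_rev in H. rewrite Forall_forall in H. apply H, nth_In; auto.
  - rewrite nth_overflow; auto.
Qed.

Lemma btrans_dren T t : resolved T t -> forall f, btrans T (dren f t) = cren f (btrans T t).
Proof.
  induction t using dterm_nested_ind; intros Ht f; inversion Ht; subst; cbn [dren];
    try (simpl; f_equal; auto; fail).
  rewrite !(btrans_lab _ _ _ A L), cren_cinst_sub by (rewrite ?length_map; auto).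
  rewrite !map_map. do 2 f_equal. apply map_ext_in. intros x Hx.
  rewrite Forall_forall in *. auto.
Qed.

Lemma btrans_dsubst T t : resolved T t -> forall s, (forall n, resolved T (s n)) ->
  btrans T (dsubst s t) = csubst (fun n => btrans T (s n)) (btrans T t).
Proof.
  induction t using dterm_nested_ind; intros Ht s Hs; inversion Ht; subst; cbn [dsubst];
    try (simpl; f_equal; auto; fail).
  - simpl. rewrite IHt1, IHt2; auto.
    + f_equal. apply csubst_ext. intros [|n]; simpl; auto using btrans_dren.
    + intros [|n]; simpl; auto using resolved_dren.
  - rewrite !(btrans_lab _ _ _ A L), csubst_cinst_sub by (rewrite ?length_map; auto).
    rewrite !map_map. do 2 f_equal. apply map_ext_in. intros x Hx.
    rewrite Forall_forall in *. auto.
Qed.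

Lemma resolved_tcons T l A L t : tlookup l T = None -> resolved T t ->
  resolved ((l, A, L) :: T) t /\ btrans ((l, A, L) :: T) t = btrans T t.
Proof.
  intros Hl. induction t using dterm_nested_ind; intros Ht; inversion Ht; subst; simpl;
    try (split; auto; fail).
  - destruct IHt1, IHt2; auto. split; [constructor | f_equal]; auto.
  - destruct IHt1, IHt2; auto. split; [constructor | f_equal]; auto.
  - assert (Hne : Nat.eqb l0 l = false) by (apply Nat.eqb_neq; congruence).
    rewrite Forall_forall in *. rewrite Hne. split.
    + econstructor; [simpl; rewrite Hne; eauto | eauto |].
      rewrite Forall_forall. intros x Hx. apply H; auto.
    + rewrite (map_ext_in _ (btrans T) Ms); [reflexivity|]. intros x Hx. apply H; auto.
Qed.

Lemma bterm_dinst D Ms P : Forall (resolved (btable D)) Ms -> resolved (btable D) P ->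
  bterm D (dinst Ms P) = csubst (cinst_sub (map (bterm D) Ms)) (bterm D P).
Proof.
  intros HMs HP. unfold bterm, dinst. rewrite btrans_dsubst by auto using resolved_dinst_sub.
  apply csubst_ext. intros n. apply btrans_dinst_sub.
Qed.

(** * Sound label contexts *)

Record entry_sound (D : lctx) (e : lentry) : Prop := {
  resolved_ldom : resolved (btable D) (ldom e);
  resolved_lbody : resolved (btable D) (lbody e);
  resolved_lcod : resolved (btable D) (lcod e);
  resolved_lparams : Forall (resolved (btable D)) (lparams e);
  cclosed_entry : cclosed (length (lparams e)) (CLam (bterm D (ldom e)) (bterm D (lbody e)));
  cwf_lparams : cwf (bctx D (rev (lparams e)));
  ctyping_entry : ctyping (bctx D (rev (lparams e)))
    (CLam (bterm D (ldom e)) (bterm D (lbody e))) (CPi (bterm D (ldom e)) (bterm D (lcod e)))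
}.

Fixpoint lctx_sound (D : lctx) : Prop :=
  match D with
  | [] => True
  | e :: D' => lctx_sound D' /\ tlookup (lname e) (btable D') = None /\ entry_sound D' e
  end.

Definition table_extends (D' D : lctx) : Prop :=
  forall t, resolved (btable D') t -> resolved (btable D) t /\ bterm D t = bterm D' t.

Lemma lctx_sound_lookup D e : lctx_sound D -> In e D -> exists D',
  entry_sound D' e /\
  tlookup (lname e) (btable D) = Some (bterm D' (ldom e), bterm D' (lbody e)) /\
  table_extends D' D.
Proof.
  induction D as [|e' D IH]; intros HD Hin; [destruct Hin|].
  destruct HD as [HD [Hfresh He']]. destruct Hin as [<- | Hin].
  - exists D. split; [auto|]. split.
    + simpl. rewrite Nat.eqb_refl. reflexivity.
    + intros t Ht. apply resolved_tcons; auto.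
  - destruct (IH HD Hin) as [D' [He [Hl Hext]]]. exists D'. split; [auto|]. split.
    + simpl. destruct (Nat.eqb_spec (lname e) (lname e')); [congruence | auto].
    + intros t Ht. destruct (Hext t Ht) as [Ht' E].
      destruct (resolved_tcons _ (lname e') (bterm D (ldom e')) (bterm D (lbody e')) _ Hfresh Ht').
      split; auto. unfold bterm in *. simpl. congruence.
Qed.

Lemma tlookup_btable_fresh D l :
  ~ (exists e, In e D /\ lname e = l) -> tlookup l (btable D) = None.
Proof.
  induction D as [|e D IH]; intros H; simpl; auto.
  destruct (Nat.eqb_spec l (lname e)).
  - exfalso. apply H. exists e. auto using in_eq.
  - apply IH. intros [e' [Hin He']]. apply H. exists e'. auto using in_cons.
Qed.

(** * Equivalence becomes conversion *)

Section Equivalence.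
Variable D : lctx.
Hypothesis HD : lctx_sound D.

Lemma tlookup_lbody e : In e D -> resolved (btable D) (lbody e) /\
  exists A, tlookup (lname e) (btable D) = Some (A, bterm D (lbody e)).
Proof.
  intros Hin. destruct (lctx_sound_lookup D e HD Hin) as [D' [He [Hl Hext]]].
  destruct (Hext _ (resolved_lbody _ _ He)) as [Hbody Ebody].
  split; [auto|]. rewrite Ebody. eauto.
Qed.

Lemma bterm_dstep_lab e Ms N : In e D ->
  resolved (btable D) (DApp (DLab (lname e) Ms) N) ->
  resolved (btable D) (dinst (Ms ++ [N]) (lbody e)) /\
  cconv (bterm D (DApp (DLab (lname e) Ms) N)) (bterm D (dinst (Ms ++ [N]) (lbody e))).
Proof.
  intros Hin Hr. inversion Hr as [| | | ? ? Hlab HN |]; subst.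
  inversion Hlab as [| | | | ? ? A L Hl Hc HMs]; subst.
  destruct (tlookup_lbody e Hin) as [Hbody [A' Hl']]. rewrite Hl' in Hl. injection Hl as <- <-.
  assert (Hs : forall n, resolved (btable D) (dinst_sub (Ms ++ [N]) n))
    by (apply resolved_dinst_sub, Forall_app; auto).
  split; [apply resolved_dsubst; auto|].
  change (bterm D (DApp ?M ?N)) with (CApp (bterm D M) (bterm D N)).
  unfold bterm at 1. rewrite (btrans_lab _ _ _ _ _ Hl').
  eapply cconv_trans; [apply cstep_cconv, cstep_beta|].
  unfold bterm, dinst, csubst1. rewrite btrans_dsubst, csubst_csubst by auto.
  destruct Hc as [_ Hc]. erewrite (csubst_ext_closed _ _ _ _ Hc); [apply cconv_refl|].
  intros k Hk. simpl. rewrite btrans_dinst_sub, map_app. apply cinst_sub_snoc.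
Qed.

Lemma bterm_dstep t u : dstep D t u -> resolved (btable D) t ->
  resolved (btable D) u /\ cconv (bterm D t) (bterm D u).
Proof.
  induction 1; intros Ht; [apply bterm_dstep_lab; auto|..].
  1-4: inversion Ht; subst; destruct IHdstep as [Hr Hc]; auto;
    split; auto; first [apply cconv_pi | apply cconv_app]; auto.
  inversion Ht as [| | | | ? ? A L Hl Hc HMs]; subst.
  apply Forall_app in HMs as [HMs1 HMs2]. inversion HMs2 as [| ? ? HM HMs2']; subst.
  destruct IHdstep as [HM' CM]; auto. split.
  - econstructor; eauto.
    + rewrite !length_app in *. auto.
    + apply Forall_app; auto.
  - unfold bterm. rewrite !(btrans_lab _ _ _ A L) by auto.
    apply cconv_csubst_pointwise, cinst_sub_cconv. rewrite !map_app.
    apply Forall2_app; [|constructor]; auto using Forall2_refl.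
Qed.

Lemma bterm_dred t u : dred D t u -> resolved (btable D) t ->
  resolved (btable D) u /\ cconv (bterm D t) (bterm D u).
Proof.
  induction 1; intros Ht.
  - apply bterm_dstep; auto.
  - auto.
  - destruct IHclos_refl_trans1 as [Hy Cxy]; auto.
    destruct IHclos_refl_trans2 as [Hz Cyz]; eauto using cconv_trans.
Qed.

(* The eta clause of DCC equivalence becomes an eta step of CC: the label
   translates to a lambda, whose body is the translated [lbody e]. *)
Lemma bterm_deq_eta L M M' e Ns :
  dred D L (DLab (lname e) Ns) -> dred D M M' -> In e D ->
  resolved (btable D) L -> resolved (btable D) M ->
  (resolved (btable D) (dsubst (dup (dinst_sub Ns)) (lbody e)) ->
   resolved (btable D) (DApp (dren S M') (DVar 0)) ->
   cconv (bterm D (dsubst (dup (dinst_sub Ns)) (lbody e))) (bterm D (DApp (dren S M') (DVar 0)))) ->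
  cconv (bterm D L) (bterm D M).
Proof.
  intros HL HM Hin RL RM IH.
  destruct (bterm_dred _ _ HL RL) as [RN CL]. destruct (bterm_dred _ _ HM RM) as [RM' CM].
  inversion RN as [| | | | ? ? A Lb Hl _ RNs]; subst.
  destruct (tlookup_lbody e Hin) as [Hbody [A' Hl']]. rewrite Hl' in Hl. injection Hl as <- <-.
  assert (Hs : forall n, resolved (btable D) (dup (dinst_sub Ns) n))
    by (intros [|n]; simpl; auto using resolved_dren, resolved_dinst_sub).
  assert (Ebody : bterm D (dsubst (dup (dinst_sub Ns)) (lbody e))
                  = csubst (cup (cinst_sub (map (bterm D) Ns))) (bterm D (lbody e))).
  { unfold bterm. rewrite btrans_dsubst by auto. apply csubst_ext. intros [|n]; simpl; auto.
    rewrite btrans_dren, btrans_dinst_sub by auto using resolved_dinst_sub. reflexivity. }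
  assert (EM : bterm D (DApp (dren S M') (DVar 0)) = CApp (cren S (bterm D M')) (CVar 0))
    by (unfold bterm; simpl; rewrite btrans_dren; auto).
  specialize (IH (resolved_dsubst _ _ Hbody _ Hs) (resolved_app _ _ _ (resolved_dren _ _ RM' _) (resolved_var _ _))).
  rewrite Ebody, EM in IH.
  apply cconv_trans with (1 := CL). unfold bterm at 1. rewrite (btrans_lab _ _ _ _ _ Hl').
  eapply cconv_trans; [apply cconv_lam; [apply cconv_refl | exact IH]|].
  eapply cconv_trans; [apply cstep_cconv, cstep_eta | auto].
Qed.

Lemma bterm_deq a b : deq D a b -> resolved (btable D) a -> resolved (btable D) b ->
  cconv (bterm D a) (bterm D b).
Proof.
  induction 1; intros Ha Hb.
  - destruct (bterm_dred _ _ H Ha), (bterm_dred _ _ H0 Hb). eauto using cconv_trans.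
  - eapply bterm_deq_eta; eauto.
  - apply cconv_sym. eapply bterm_deq_eta; eauto.
Qed.
End Equivalence.

(** * Preservation of typing *)

Record translates_wf (D : lctx) (G : dctx) : Prop := {
  sound_lctx : lctx_sound D;
  resolved_dctx : Forall (resolved (btable D)) G;
  cwf_bctx : cwf (bctx D G)
}.

Record translates (D : lctx) (G : dctx) (M A : dterm) : Prop := {
  translates_ctx : translates_wf D G;
  resolved_term : resolved (btable D) M;
  resolved_type : resolved (btable D) A;
  ctyping_bterm : ctyping (bctx D G) (bterm D M) (bterm D A)
}.

Lemma translates_wf_empty : translates_wf [] [].
Proof. repeat constructor. Qed.

Lemma translates_wf_label D e i :
  ~ (exists e', In e' D /\ lname e' = lname e) ->
  translates D (rev (lparams e)) (DPi (ldom e) (lcod e)) (DUniv i) ->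
  translates D (ldom e :: rev (lparams e)) (lbody e) (lcod e) ->
  translates_wf (e :: D) [].
Proof.
  intros Hfresh [[HD Hps Hwf] Hpi _ _] [_ Hbody Hcod Hty].
  inversion Hpi; subst.
  assert (Hlam : ctyping (bctx D (rev (lparams e)))
                   (CLam (bterm D (ldom e)) (bterm D (lbody e)))
                   (CPi (bterm D (ldom e)) (bterm D (lcod e)))) by (constructor; exact Hty).
  constructor; [|constructor|constructor].
  refine (conj HD (conj (tlookup_btable_fresh _ _ Hfresh) _)).
  constructor; auto.
  - rewrite <- (rev_involutive (lparams e)). apply Forall_rev; auto.
  - pose proof (ctyping_closed _ _ _ Hlam) as Hc.
    unfold bctx in Hc. rewrite length_map, length_rev in Hc. exact Hc.
Qed.

Lemma translates_wf_ext D G A i :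
  translates_wf D G -> translates D G A (DUniv i) -> translates_wf D (A :: G).
Proof.
  intros [HD HG Hwf] [_ HA _ Hty]. constructor; auto.
  econstructor; eauto.
Qed.

Lemma translates_var D G n A :
  translates_wf D G -> nth_error G n = Some A ->
  translates D G (DVar n) (dren (fun k => S n + k) A).
Proof.
  intros [HD HG Hwf] Hn.
  assert (HA : resolved (btable D) A) by (rewrite Forall_forall in HG; eapply HG, nth_error_In; eauto).
  constructor; auto using resolved_dren; [constructor; auto|].
  unfold bterm. rewrite btrans_dren by auto. constructor; auto.
  unfold bctx. rewrite nth_error_map, Hn. reflexivity.
Qed.

Lemma translates_univ D G i : translates_wf D G -> translates D G (DUniv i) (DUniv (S i)).
Proof. intros HDG. constructor; auto. apply cty_univ, HDG. Qed.

Lemma translates_pi D G A B i j :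
  translates D G A (DUniv i) -> translates D (A :: G) B (DUniv j) ->
  translates D G (DPi A B) (DUniv (Nat.max i j)).
Proof.
  intros [HDG HA _ HtA] [_ HB _ HtB].
  constructor; auto. econstructor; eauto.
Qed.

Lemma translates_app D G M N A B :
  translates D G M (DPi A B) -> translates D G N A ->
  translates D G (DApp M N) (dsubst1 N B).
Proof.
  intros [HDG HM HP HtM] [_ HN _ HtN]. inversion HP; subst.
  assert (Hs : forall n, resolved (btable D) (match n with 0 => N | S k => DVar k end))
    by (intros [|n]; auto).
  constructor; auto.
  - apply resolved_dsubst; auto.
  - unfold bterm, dsubst1. rewrite btrans_dsubst by auto.
    rewrite (csubst_ext _ _ (fun n => match n with 0 => bterm D N | S k => CVar k end))
      by (intros [|n]; reflexivity).
    econstructor; eauto.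
Qed.

Lemma translates_conv D G M A B i :
  translates D G M A -> deq D A B -> translates D G B (DUniv i) -> translates D G M B.
Proof.
  intros [HDG HM HA HtM] Heq [_ HB _ HtB].
  constructor; auto. eapply cty_conv; eauto. apply bterm_deq; auto. apply HDG.
Qed.

Lemma typed_subst_label_args D D' G e Ms :
  table_extends D' D -> entry_sound D' e -> length Ms = length (lparams e) ->
  Forall (resolved (btable D)) Ms ->
  (forall k, k < length Ms -> translates D G (nth k Ms (DVar 0))
     (dinst (firstn k Ms) (nth k (lparams e) (DVar 0)))) ->
  typed_subst (bctx D G) (cinst_sub (map (bterm D) Ms)) (bctx D' (rev (lparams e))).
Proof.
  intros Hext He Hlen RMs HMs.
  unfold bctx. rewrite map_rev. apply typed_subst_cinst_sub.
  - rewrite <- map_rev. apply (cwf_lparams _ _ He).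
  - rewrite !length_map. auto.
  - intros k Hk. rewrite length_map in Hk.
    assert (RPk : resolved (btable D') (nth k (lparams e) (DVar 0))).
    { eapply Forall_forall; [apply (resolved_lparams _ _ He)|]. apply nth_In. lia. }
    destruct (Hext _ RPk) as [RPk' EPk].
    assert (RMsk : Forall (resolved (btable D)) (firstn k Ms)).
    { rewrite <- (firstn_skipn k Ms) in RMs. apply Forall_app in RMs. tauto. }
    pose proof (ctyping_bterm _ _ _ _ (HMs k Hk)) as Htk.
    rewrite bterm_dinst, EPk, <- (map_nth (bterm D) Ms (DVar 0) k),
      <- (map_nth (bterm D') (lparams e) (DVar 0) k) in Htk by auto.
    rewrite firstn_map. exact Htk.
Qed.

Lemma translates_lab D G e Ms :
  translates_wf D G -> In e D -> length Ms = length (lparams e) ->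
  (forall k, k < length Ms -> translates D G (nth k Ms (DVar 0))
     (dinst (firstn k Ms) (nth k (lparams e) (DVar 0)))) ->
  translates D G (DLab (lname e) Ms) (dinst Ms (DPi (ldom e) (lcod e))).
Proof.
  intros HDG Hin Hlen HMs.
  destruct (lctx_sound_lookup D e (sound_lctx _ _ HDG) Hin) as [D' [He [Hl Hext]]].
  assert (RMs : Forall (resolved (btable D)) Ms).
  { apply Forall_forall. intros x Hx. destruct (In_nth _ _ (DVar 0) Hx) as [k [Hk <-]].
    apply (HMs k Hk). }
  destruct (Hext _ (resolved_ldom _ _ He)) as [Rd Ed].
  destruct (Hext _ (resolved_lcod _ _ He)) as [Rc Ec].
  constructor; auto.
  - econstructor; eauto. rewrite Hlen. apply (cclosed_entry _ _ He).
  - apply resolved_dsubst; auto using resolved_dinst_sub.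
  - unfold bterm at 1. rewrite (btrans_lab _ _ _ _ _ Hl), bterm_dinst by auto.
    change (bterm D (DPi ?a ?b)) with (CPi (bterm D a) (bterm D b)). rewrite Ed, Ec.
    apply (ctyping_csubst _ _ _ _ _ (ctyping_entry _ _ He)); [apply HDG|].
    apply typed_subst_label_args; auto.
Qed.

Scheme dwf_mut := Induction for dwf Sort Prop
with dtyping_mut := Induction for dtyping Sort Prop.
Combined Scheme dwf_dtyping_mut from dwf_mut, dtyping_mut.

Lemma dwf_dtyping_translate :
  (forall D G, dwf D G -> translates_wf D G) /\
  (forall D G M A, dtyping D G M A -> translates D G M A).
Proof.
  apply (dwf_dtyping_mut (fun D G _ => translates_wf D G) (fun D G M A _ => translates D G M A));
    intros.
  - apply translates_wf_empty.
  - eapply translates_wf_label; eauto.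
  - eapply translates_wf_ext; eauto.
  - apply translates_var; auto.
  - apply translates_univ; auto.
  - apply translates_pi; auto.
  - eapply translates_app; eauto.
  - eapply translates_conv; eauto.
  - apply translates_lab; auto.
Qed.

Theorem lemma3p22 : forall (D : lctx) (G : dctx) (M A : dterm),
  dtyping D G M A -> ctyping (bctx D G) (bterm D M) (bterm D A).
Proof.
  intros D G M A H. exact (ctyping_bterm _ _ _ _ (proj2 dwf_dtyping_translate _ _ _ _ H)).
Qed.
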